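(* Let $$A = \begin{pmatrix} a_1 & b_1\\ c_1 & d_1\end{pmatrix},\qquad B = \begin{pmatrix} a_2 & b_2\\ c_2 & d_2\end{pmatrix}$$ be elements of $\mathrm{SL}_2(\mathbb{N}_0)$. Then $(A,B)$ is a left-right pair if and only if $a_1 d_2 \le b_2 c_1$ or $a_2 d_1 \le c_2 b_1$.
   Context: $\mathbb{N}_0=\{0,1,2,\dots\}$ and $\mathrm{SL}_2(\mathbb{N}_0)$ is the set of $2\times 2$ matrices $\begin{pmatrix} a & b\\ c & d\end{pmatrix}$ with $a,b,c,d\in\mathbb{N}_0$ and $ad-bc=1$. Such a matrix $T$ acts on the Riemann sphere $\overline{\mathbb{C}}=\mathbb{C}\cup\{\infty\}$ by the Möbius transformation $T(z)=\frac{az+b}{cz+d}$. Let $\mathcal{D}_0=\{x+iy : x>0,\ y>0\}$ (the open first quadrant). A pair $(L,R)$ of elements of $\mathrm{SL}_2(\mathbb{N}_0)$ is called a left-right pair if $L(\mathcal{D}_0)\cap R(\mathcal{D}_0)=\emptyset$. *)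

From Stdlib Require Import Reals Lra Lia.
Open Scope R_scope.

(** Complex numbers x + i y as pairs (x, y). *)
Definition Cpx := (R * R)%type.

Definition Cadd (z w : Cpx) : Cpx := (fst z + fst w, snd z + snd w).
Definition Cmul (z w : Cpx) : Cpx :=
  (fst z * fst w - snd z * snd w, fst z * snd w + snd z * fst w).
Definition Cinv (z : Cpx) : Cpx :=
  let n := fst z * fst z + snd z * snd z in (fst z / n, - snd z / n).
Definition Cdiv (z w : Cpx) : Cpx := Cmul z (Cinv w).
Definition Cofnat (n : nat) : Cpx := (INR n, 0).

(** 2x2 matrices with entries in N_0, [[a, b], [c, d]]. *)
Record mat2 := Mat2 { ma : nat; mb : nat; mc : nat; md : nat }.

Definition SL2N0 (T : mat2) : Prop := (ma T * md T = mb T * mc T + 1)%nat.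

(** Möbius action z |-> (a z + b) / (c z + d).  For T in SL_2(N_0) and z in
    the open first quadrant, c z + d <> 0, so T(z) is a finite complex number. *)
Definition mobius (T : mat2) (z : Cpx) : Cpx :=
  Cdiv (Cadd (Cmul (Cofnat (ma T)) z) (Cofnat (mb T)))
       (Cadd (Cmul (Cofnat (mc T)) z) (Cofnat (md T))).

Definition D0 (z : Cpx) : Prop := 0 < fst z /\ 0 < snd z.

Definition in_image (T : mat2) (w : Cpx) : Prop :=
  exists z, D0 z /\ mobius T z = w.

Definition left_right_pair (L Rm : mat2) : Prop :=
  ~ (exists w, in_image L w /\ in_image Rm w).

(* A real matrix T = [[a, b], [c, d]] of determinant 1 maps the open first
   quadrant onto the open upper half-disk over the diameter between b/d and
   a/c (a half-plane when c = 0): for w = T z one has Im w = Im z / |cz + d|^2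
   and Re((a - c w)(d conj(w) - b)) = Re z / |cz + d|^2, and the inverse
   Mobius map gives the converse inclusion.  Two such half-disks meet iff
   their diameters overlap, i.e. iff b2/d2 < a1/c1 and b1/d1 < a2/c2; a common
   point then lies just right of the larger left endpoint, at small height. *)

From Stdlib Require Import Reals Arith Lra Lia.
Open Scope R_scope.

Definition mobR (a b c d : R) (z : Cpx) : Cpx :=
  Cdiv (Cadd (Cmul (a, 0) z) (b, 0)) (Cadd (Cmul (c, 0) z) (d, 0)).

(* The second condition says Re((a - c w)(d conj(w) - b)) > 0. *)
Definition half_disk (a b c d : R) (w : Cpx) : Prop :=
  0 < snd w /\ 0 < (a - c * fst w) * (d * fst w - b) - c * d * (snd w * snd w).

Lemma sum_sq_pos (p q : R) : p <> 0 \/ q <> 0 -> 0 < p * p + q * q.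
Proof.
  intros [H | H].
  - pose proof (Rsqr_pos_lt p H); pose proof (Rle_0_sqr q); unfold Rsqr in *; lra.
  - pose proof (Rsqr_pos_lt q H); pose proof (Rle_0_sqr p); unfold Rsqr in *; lra.
Qed.

Lemma mobR_D0_half_disk (a b c d : R) (z : Cpx) :
  a * d - b * c = 1 -> D0 z -> half_disk a b c d (mobR a b c d z).
Proof.
  destruct z as [x y]; intros Hdet [Hx Hy]; simpl in Hx, Hy.
  set (n := (c * x + d) * (c * x + d) + (c * y) * (c * y)).
  assert (Hn : 0 < n).
  { apply sum_sq_pos; destruct (Req_dec c 0) as [-> | Hc].
    - left; nra.
    - right; apply Rmult_integral_contrapositive; lra. }
  set (w := mobR a b c d (x, y)).
  assert (Him : snd w = (a * d - b * c) * y / n).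
  { unfold w, mobR, Cdiv, Cmul, Cadd, Cinv, n; simpl. field. unfold n in Hn. lra. }
  assert (Hre : (a - c * fst w) * (d * fst w - b) - c * d * (snd w * snd w)
                = (a * d - b * c) * (a * d - b * c) * x / n).
  { unfold w, mobR, Cdiv, Cmul, Cadd, Cinv, n; simpl. field. unfold n in Hn. lra. }
  split.
  - rewrite Him, Hdet. apply Rdiv_lt_0_compat; lra.
  - rewrite Hre, Hdet. apply Rdiv_lt_0_compat; lra.
Qed.

Lemma half_disk_mobR_preimage (a b c d : R) (w : Cpx) :
  a * d - b * c = 1 -> half_disk a b c d w -> exists z, D0 z /\ mobR a b c d z = w.
Proof.
  destruct w as [u v]; intros Hdet [Hv HQ]; simpl in Hv, HQ.
  set (Q := (a - c * u) * (d * u - b) - c * d * (v * v)) in HQ.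
  set (E := (a - c * u) * (a - c * u) + (c * v) * (c * v)).
  assert (HE : 0 < E).
  { apply sum_sq_pos; destruct (Req_dec c 0) as [-> | Hc].
    - left; nra.
    - right; apply Rmult_integral_contrapositive; lra. }
  (* The witness is (d w - b) / (a - c w); the determinant is left unsimplified
     so that [mobR a b c d z = w] becomes a plain field identity. *)
  exists (Q / E, (a * d - b * c) * v / E); split.
  - rewrite Hdet; split; simpl; apply Rdiv_lt_0_compat; lra.
  - assert (Hn : (c * (Q / E) + d) * (c * (Q / E) + d)
                 + (c * ((a * d - b * c) * v / E)) * (c * ((a * d - b * c) * v / E))
                 = (a * d - b * c) * (a * d - b * c) / E).
    { unfold Q, E; field. unfold E in HE; lra. }
    unfold mobR, Cdiv, Cmul, Cadd, Cinv; simpl.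
    rewrite !Rmult_0_l, !Rminus_0_r, !Rplus_0_r.
    rewrite Hn.
    unfold Q, E; f_equal; field; unfold E in HE; lra.
Qed.

(* The open interval (b/d, a/c), unbounded above when c = 0. *)
Definition re_interval (a b c d u : R) : Prop := b < d * u /\ c * u < a.

Lemma half_disk_re_interval (a b c d : R) (w : Cpx) :
  0 <= c -> 0 <= d -> a * d - b * c = 1 -> half_disk a b c d w -> re_interval a b c d (fst w).
Proof.
  destruct w as [u v]; intros Hc Hd Hdet [Hv HQ]; simpl in *.
  assert (0 <= c * d * (v * v)) by (apply Rmult_le_pos; nra).
  assert (Hprod : 0 < (a - c * u) * (d * u - b)) by lra.
  destruct (Rlt_or_le b (d * u)) as [Hb | Hb].
  - split; [exact Hb | nra].
  - exfalso. assert (Ha : a - c * u < 0) by nra. nra.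
Qed.

Lemma re_intervals_disjoint (a1 b1 c1 d1 a2 b2 c2 d2 u : R) :
  0 <= c1 -> 0 < d2 -> a1 * d2 <= b2 * c1 ->
  re_interval a1 b1 c1 d1 u -> ~ re_interval a2 b2 c2 d2 u.
Proof. intros Hc Hd Hsep [_ H1] [H2 _]. nra. Qed.

Lemma mul_lt_of_le_div_succ (K P e : R) : 0 <= K -> 0 < P -> e <= P / (K + 1) -> K * e < P.
Proof.
  intros HK HP He.
  apply Rmult_le_compat_l with (r := K) in He; [| exact HK].
  assert (K * (P / (K + 1)) < P).
  { apply Rmult_lt_reg_r with (r := K + 1); [lra |]. field_simplify; lra. }
  lra.
Qed.

Lemma re_interval_right_of (a b c d l e : R) :
  0 <= c -> 0 < d -> b / d <= l -> c * l < a -> 0 < e -> e <= (a - c * l) / (c + 1) ->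
  re_interval a b c d (l + e).
Proof.
  intros Hc Hd Hbl Hl He Hea; split.
  - apply Rmult_le_compat_l with (r := d) in Hbl; [| lra].
    replace (d * (b / d)) with b in Hbl by (field; lra). nra.
  - pose proof (mul_lt_of_le_div_succ c (a - c * l) e Hc ltac:(lra) Hea). lra.
Qed.

Lemma common_re_point (a1 b1 c1 d1 a2 b2 c2 d2 : R) :
  0 <= c1 -> 0 <= c2 -> 0 < d1 -> 0 < d2 ->
  b1 * c1 < a1 * d1 -> b2 * c2 < a2 * d2 -> b2 * c1 < a1 * d2 -> b1 * c2 < a2 * d1 ->
  exists u, re_interval a1 b1 c1 d1 u /\ re_interval a2 b2 c2 d2 u.
Proof.
  intros Hc1 Hc2 Hd1 Hd2 H11 H22 H21 H12.
  set (l := Rmax (b1 / d1) (b2 / d2)).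
  assert (Hl1 : c1 * l < a1).
  { unfold l, Rmax; destruct Rle_dec.
    - apply Rmult_lt_reg_r with d2; [lra|]. field_simplify; lra.
    - apply Rmult_lt_reg_r with d1; [lra|]. field_simplify; lra. }
  assert (Hl2 : c2 * l < a2).
  { unfold l, Rmax; destruct Rle_dec.
    - apply Rmult_lt_reg_r with d2; [lra|]. field_simplify; lra.
    - apply Rmult_lt_reg_r with d1; [lra|]. field_simplify; lra. }
  set (e1 := (a1 - c1 * l) / (c1 + 1)).
  set (e2 := (a2 - c2 * l) / (c2 + 1)).
  assert (He : 0 < Rmin e1 e2).
  { apply Rmin_glb_lt; apply Rdiv_lt_0_compat; lra. }
  exists (l + Rmin e1 e2); split; apply re_interval_right_of; auto.
  - apply Rmax_l.
  - apply Rmin_l.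
  - apply Rmax_r.
  - apply Rmin_r.
Qed.

Lemma half_disk_of_re_interval (a b c d u v : R) :
  0 <= c -> 0 <= d -> re_interval a b c d u -> 0 < v -> v <= 1 ->
  v <= (a - c * u) * (d * u - b) / (c * d + 1) -> half_disk a b c d (u, v).
Proof.
  intros Hc Hd [Hb Ha] Hv Hv1 HvP; split; simpl; [exact Hv |].
  assert (Hcd : 0 <= c * d) by (apply Rmult_le_pos; lra).
  assert (HP : 0 < (a - c * u) * (d * u - b)) by (apply Rmult_lt_0_compat; lra).
  pose proof (mul_lt_of_le_div_succ _ _ _ Hcd HP HvP).
  assert (c * d * (v * v) <= c * d * v) by (apply Rmult_le_compat_l; nra).
  lra.
Qed.

Lemma common_half_disk_point (a1 b1 c1 d1 a2 b2 c2 d2 : R) :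
  0 <= c1 -> 0 <= c2 -> 0 < d1 -> 0 < d2 ->
  b1 * c1 < a1 * d1 -> b2 * c2 < a2 * d2 -> b2 * c1 < a1 * d2 -> b1 * c2 < a2 * d1 ->
  exists w, half_disk a1 b1 c1 d1 w /\ half_disk a2 b2 c2 d2 w.
Proof.
  intros Hc1 Hc2 Hd1 Hd2 H11 H22 H21 H12.
  destruct (common_re_point a1 b1 c1 d1 a2 b2 c2 d2) as (u & [Hb1 Ha1] & [Hb2 Ha2]); auto.
  set (h1 := (a1 - c1 * u) * (d1 * u - b1) / (c1 * d1 + 1)).
  set (h2 := (a2 - c2 * u) * (d2 * u - b2) / (c2 * d2 + 1)).
  assert (Hh : 0 < Rmin h1 h2).
  { apply Rmin_glb_lt; apply Rdiv_lt_0_compat;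
      solve [apply Rmult_lt_0_compat; lra | nra]. }
  set (v := Rmin 1 (Rmin h1 h2)).
  assert (Hv : 0 < v) by (apply Rmin_glb_lt; lra).
  assert (Hv1 : v <= 1) by apply Rmin_l.
  assert (Hvh1 : v <= h1) by (apply Rle_trans with (Rmin h1 h2); [apply Rmin_r | apply Rmin_l]).
  assert (Hvh2 : v <= h2) by (apply Rle_trans with (Rmin h1 h2); [apply Rmin_r | apply Rmin_r]).
  exists (u, v); split; apply half_disk_of_re_interval; try split; auto; lra.
Qed.

Lemma mobR_image_D0_iff (a b c d : R) (w : Cpx) :
  a * d - b * c = 1 -> (exists z, D0 z /\ mobR a b c d z = w) <-> half_disk a b c d w.
Proof.
  intros Hdet; split.
  - intros (z & Hz & <-). exact (mobR_D0_half_disk a b c d z Hdet Hz).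
  - exact (half_disk_mobR_preimage a b c d w Hdet).
Qed.

Lemma SL2N0_det_INR (a b c d : nat) :
  SL2N0 (Mat2 a b c d) -> INR a * INR d - INR b * INR c = 1.
Proof.
  unfold SL2N0; simpl; intros H.
  apply (f_equal INR) in H. rewrite mult_INR, plus_INR, mult_INR in H. simpl in H. lra.
Qed.

Lemma SL2N0_d_pos (a b c d : nat) : SL2N0 (Mat2 a b c d) -> 0 < INR d.
Proof. unfold SL2N0; simpl; intros H. apply lt_0_INR. destruct d; lia. Qed.

Lemma in_image_Mat2_iff (a b c d : nat) (w : Cpx) :
  SL2N0 (Mat2 a b c d) ->
  in_image (Mat2 a b c d) w <-> half_disk (INR a) (INR b) (INR c) (INR d) w.
Proof. intros H. exact (mobR_image_D0_iff _ _ _ _ w (SL2N0_det_INR a b c d H)). Qed.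

Lemma INR_mul_lt (m n p q : nat) : (m * n < p * q)%nat -> INR m * INR n < INR p * INR q.
Proof. intros H. rewrite <- !mult_INR. now apply lt_INR. Qed.

Lemma INR_mul_le (m n p q : nat) : (m * n <= p * q)%nat -> INR m * INR n <= INR p * INR q.
Proof. intros H. rewrite <- !mult_INR. now apply le_INR. Qed.

Theorem theorem1p1 (a1 b1 c1 d1 a2 b2 c2 d2 : nat) :
  SL2N0 (Mat2 a1 b1 c1 d1) -> SL2N0 (Mat2 a2 b2 c2 d2) ->
  (left_right_pair (Mat2 a1 b1 c1 d1) (Mat2 a2 b2 c2 d2) <->
   ((a1 * d2 <= b2 * c1)%nat \/ (a2 * d1 <= c2 * b1)%nat)).
Proof.
  intros H1 H2.
  pose proof (SL2N0_det_INR _ _ _ _ H1) as Hdet1.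
  pose proof (SL2N0_det_INR _ _ _ _ H2) as Hdet2.
  pose proof (SL2N0_d_pos _ _ _ _ H1) as Hd1.
  pose proof (SL2N0_d_pos _ _ _ _ H2) as Hd2.
  pose proof (pos_INR c1) as Hc1; pose proof (pos_INR c2) as Hc2.
  unfold left_right_pair; split.
  - intros Hdisj.
    destruct (le_lt_dec (a1 * d2) (b2 * c1)) as [? | H21]; [now left |].
    destruct (le_lt_dec (a2 * d1) (c2 * b1)) as [? | H12]; [now right |].
    exfalso; apply Hdisj.
    destruct (common_half_disk_point (INR a1) (INR b1) (INR c1) (INR d1)
                (INR a2) (INR b2) (INR c2) (INR d2)) as (w & Hw1 & Hw2);
      try lra; try (apply INR_mul_lt; lia).
    exists w; rewrite !in_image_Mat2_iff by assumption; now split.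
  - intros Hsep (w & Hw1 & Hw2).
    rewrite in_image_Mat2_iff in Hw1, Hw2 by assumption.
    apply half_disk_re_interval in Hw1; try lra.
    apply half_disk_re_interval in Hw2; try lra.
    destruct Hsep as [Hsep | Hsep]; apply INR_mul_le in Hsep.
    + exact (re_intervals_disjoint _ _ _ _ _ _ _ _ _ Hc1 Hd2 Hsep Hw1 Hw2).
    + rewrite (Rmult_comm (INR c2)) in Hsep.
      exact (re_intervals_disjoint _ _ _ _ _ _ _ _ _ Hc2 Hd1 Hsep Hw2 Hw1).
Qed.
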